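(* Let $n$ be a positive integer, $\pi\in\mathrm{NC}_B(n)$ and $\psi(\pi)=(\sigma,x)$. Write $i\sim_\pi j$ (resp. $i\sim_\sigma j$) if $i,j$ lie in the same block of $\pi$ (resp. $\sigma$), and $i\not\sim_\pi j$ otherwise. Let $i<j$ be positive integers in $[n]$ with $i\sim_\sigma j$. Then: (1) if $x=\emptyset$, then $i\sim_\pi j$ and $i\not\sim_\pi -j$; (2) if $x$ is an edge $(a,b)$ of $\sigma$, then $i\not\sim_\pi j$ and $i\sim_\pi -j$ when $i\le a<b\le j$, and $i\sim_\pi j$ and $i\not\sim_\pi -j$ otherwise; (3) if $x$ is a block $B$ of $\sigma$, then $i\sim_\pi j$ and $i\sim_\pi -j$ when $\{i,j\}\subseteq B$; $i\not\sim_\pi j$ and $i\sim_\pi -j$ when $\{i,j\}\not\subseteq B$ and $i<\min B\le\max B<j$; and $i\sim_\pi j$ and $i\not\sim_\pi -j$ otherwise.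
   Context: $[\pm n]=\{1,\dots,n,-1,\dots,-n\}$. A partition of type $B_n$ is a partition $\pi$ of $[\pm n]$ such that $-B$ is a block whenever $B$ is, with at most one block satisfying $B=-B$; it is noncrossing if, in the linear order $1<\cdots<n<-1<\cdots<-n$, there are no $a<b<c<d$ with $a,c$ in one block and $b,d$ in another. $\mathrm{NC}_B(n)$ is the set of these; $\mathrm{NC}(n)$ is the set of noncrossing partitions of $[n]$. An edge of $\sigma\in\mathrm{NC}(n)$ is a pair $(i,j)$, $i<j$, with $i,j$ in a common block containing no integer strictly between them. The map $\psi$: given $\pi\in\mathrm{NC}_B(n)$, let $\eta$ be obtained by deleting all negative integers from the blocks of $\pi$ (discarding empty sets), and let $X$ be the set of blocks $A$ of $\eta$ such that the block of $\pi$ containing $A$ also contains a negative integer. Write $X=\{A_1,\dots,A_m\}$ with $\max A_1<\cdots<\max A_m$. Let $\sigma$ be obtained from $\eta$ by merging $A_i$ and $A_{m+1-i}$ for $i=1,\dots,\lfloor m/2\rfloor$; $x=\emptyset$ if $m=0$, $x=(\max A_{m/2},\min A_{m/2+1})$ if $m>0$ is even, $x=A_{(m+1)/2}$ if $m$ is odd; $\psi(\pi)=(\sigma,x)$. *)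

From mathcomp Require Import all_boot.
Set Implicit Arguments. Unset Strict Implicit. Unset Printing Implicit Defensive.

(* Encoding of [±n] = {1,..,n,-1,..,-n} as the finite type 'I_(n+n):
   the positive integer k (1 <= k <= n) is  pos n (k-1) = lshift n (k-1)  (value k-1),
   the negative integer -k is              neg n (k-1) = rshift n (k-1)  (value n+k-1).
   Thus the natural order on 'I_(n+n) is exactly the linear order
   1 < ... < n < -1 < ... < -n used in the definition of noncrossing.
   Similarly [n] is encoded as 'I_n (k encoded by k-1). *)

Definition pos (n : nat) (i : 'I_n) : 'I_(n + n) := lshift n i.
Definition neg (n : nat) (i : 'I_n) : 'I_(n + n) := rshift n i.

Definition flip (n : nat) (x : 'I_(n + n)) : 'I_(n + n) :=
  match split x with inl i => neg i | inr i => pos i end.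

Definition negset (n : nat) (B : {set 'I_(n + n)}) : {set 'I_(n + n)} :=
  [set flip x | x in B].

Definition typeB_partition (n : nat) (P : {set {set 'I_(n + n)}}) : Prop :=
  [/\ partition P [set: 'I_(n + n)],
      (forall B, B \in P -> negset B \in P) &
      (forall B1 B2, B1 \in P -> B2 \in P ->
          negset B1 = B1 -> negset B2 = B2 -> B1 = B2)].

Definition noncrossing (T : finType) (le : T -> nat) (P : {set {set T}}) : Prop :=
  forall B1 B2, B1 \in P -> B2 \in P -> B1 != B2 ->
    ~ (exists a b c d : T, [/\ le a < le b, le b < le c & le c < le d] /\
          [/\ a \in B1, c \in B1, b \in B2 & d \in B2]).

Definition NCB (n : nat) (P : {set {set 'I_(n + n)}}) : Prop :=
  typeB_partition P /\ noncrossing (fun x : 'I_(n + n) => nat_of_ord x) P.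

Definition sameblock (T : finType) (P : {set {set T}}) (x y : T) : bool :=
  [exists B in P, (x \in B) && (y \in B)].

Definition smax (n : nat) (A : {set 'I_n}) : nat := \max_(i in A) (i : nat).
Definition smin (n : nat) (A : {set 'I_n}) : nat := \big[minn/n]_(i in A) (i : nat).

Inductive xval (n : nat) :=
  | XEmpty
  | XEdge of nat & nat              (* an edge (a,b), a<b, 0-based values *)
  | XBlock of {set 'I_n}.
Arguments XEmpty {n}.
Arguments XEdge {n}.
Arguments XBlock {n}.

Section Psi.
Variables (n : nat) (P : {set {set 'I_(n + n)}}).

Definition pospart (B : {set 'I_(n + n)}) : {set 'I_n} := [set i | pos i \in B].

Definition eta : {set {set 'I_n}} := [set pospart B | B in P] :\ set0.

Definition Xset : {set {set 'I_n}} :=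
  [set pospart B | B in P & [exists i, pos i \in B] && [exists i, neg i \in B]].

Definition Xseq : seq {set 'I_n} := sort (fun A B => smax A <= smax B) (enum Xset).
Definition mX : nat := size Xseq.
Definition Aof (k : nat) : {set 'I_n} := nth set0 Xseq k.

(* sigma: merge A_i with A_{m+1-i} (0-based: A_k with A_{m-1-k}) *)
Definition sigma : {set {set 'I_n}} :=
  (eta :\: Xset) :|: [set Aof k :|: Aof (mX - 1 - k) | k : 'I_mX].

Definition xpsi : xval n :=
  if mX == 0 then XEmpty
  else if ~~ odd mX then XEdge (smax (Aof (mX./2 - 1))) (smin (Aof mX./2))
  else XBlock (Aof mX./2).

End Psi.

From mathcomp Require Import all_boot.
From mathcomp Require Import zify.
Set Implicit Arguments. Unset Strict Implicit. Unset Printing Implicit Defensive.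

(* Call a block of eta mixed when its pi-block also contains negative integers, and let
   [mirror A] be the positive part of the negated pi-block of a mixed block A.  Noncrossing in the
   order 1 < ... < n < -1 < ... < -n has two consequences: the mixed blocks are linearly ordered
   (when max A < max B, every element of A precedes every element of B, for otherwise some y of B
   would have the mixed x of A strictly between y and max B), and [mirror] reverses this order.
   Hence, with A_0, ..., A_(m-1) sorted by maxima, A_(m-1-k) = mirror A_k, so two elements i < j
   in a merged block A_k :|: A_(m-1-k) of sigma satisfy i ~ j when they lie in the same A_k and
   i ~ -j when i is in A_k and j in A_(m-1-k), with k < m-1-k.  An unmerged block of sigma is an
   unmixed pi-block, so by noncrossing no element of a mixed block lies between two of its elements.
   Comparing i and j with A_(m/2-1), A_(m/2) (m even) or A_((m-1)/2) (m odd) gives the cases. *)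

Section Flip.
Variable n : nat.

Lemma flip_pos (i : 'I_n) : flip (pos i) = neg i.
Proof. by rewrite /flip /pos -[lshift n i]/(unsplit (inl i)) unsplitK. Qed.

Lemma flip_neg (i : 'I_n) : flip (neg i) = pos i.
Proof. by rewrite /flip /neg -[rshift n i]/(unsplit (inr i)) unsplitK. Qed.

Lemma flipK : involutive (@flip n).
Proof.
move=> x; rewrite -[x]splitK; case: (split x) => i /=.
  by rewrite -/(pos i) flip_pos flip_neg.
by rewrite -/(neg i) flip_neg flip_pos.
Qed.

Lemma mem_negset (B : {set 'I_(n + n)}) x : (flip x \in negset B) = (x \in B).
Proof. by rewrite /negset (mem_imset _ _ (inv_inj flipK)). Qed.

Lemma negsetK : involutive (@negset n).
Proof. by move=> B; apply/setP => x; rewrite -[x in LHS]flipK !mem_negset. Qed.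

End Flip.

Section Extrema.
Variable n : nat.

Lemma leq_smax (A : {set 'I_n}) x : x \in A -> x <= smax A.
Proof. by move=> xA; rewrite /smax (bigD1 x) //= leq_maxl. Qed.

Lemma smax_mem (A : {set 'I_n}) : A != set0 -> exists2 x, x \in A & smax A = x.
Proof. by rewrite -card_gt0 => /(eq_bigmax_cond (@nat_of_ord n))[x]; exists x. Qed.

Lemma geq_smin (A : {set 'I_n}) x : x \in A -> smin A <= x.
Proof.
move=> xA; rewrite /smin -big_filter.
have : x \in [seq i <- index_enum 'I_n | i \in A] by rewrite mem_filter xA mem_index_enum.
elim: [seq i <- _ | _] => // y s IHs; rewrite inE big_cons => /predU1P[->|/IHs].
  exact: geq_minl.
exact/leq_trans/geq_minr.
Qed.

Lemma smin_mem (A : {set 'I_n}) : A != set0 -> exists2 x, x \in A & smin A = x.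
Proof.
case/set0Pn => x0 x0A.
suff [smin_n|//] : smin A = n \/ exists2 x, x \in A & smin A = x.
  by move: (geq_smin x0A) (ltn_ord x0); rewrite smin_n; lia.
rewrite /smin; elim/big_ind: _ => [| u v hu hv | x xA]; [by left | | by right; exists x].
by rewrite /minn; case: ifP.
Qed.

End Extrema.

Section NoncrossingTypeB.
Variables (n : nat) (P : {set {set 'I_(n + n)}}).
Hypothesis P_NCB : NCB P.

Local Notation pblk x := (pblock P x).

Lemma NCB_trivIset : trivIset P.
Proof. by case: P_NCB => -[/and3P[]]. Qed.

Lemma NCB_mem_pblock x : x \in pblk x.
Proof. by case: P_NCB => -[/and3P[/eqP cover_P _ _] _ _] _; rewrite mem_pblock cover_P. Qed.

Lemma NCB_pblock_mem x : pblk x \in P.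
Proof. by case: P_NCB => -[/and3P[/eqP cover_P _ _] _ _] _; rewrite pblock_mem ?cover_P. Qed.

Lemma sameblockE x y : sameblock P x y = (y \in pblk x).
Proof.
apply/existsP/idP => [[B /and3P[BP xB yB]]|yx].
  by rewrite (def_pblock NCB_trivIset BP xB).
by exists (pblk x); rewrite NCB_pblock_mem NCB_mem_pblock.
Qed.

Lemma sameblock_pblock x y : sameblock P x y = (pblk x == pblk y).
Proof.
rewrite sameblockE; apply/idP/eqP => [yx|->]; last exact: NCB_mem_pblock.
by rewrite (def_pblock NCB_trivIset (NCB_pblock_mem x) yx).
Qed.

Lemma sameblock_refl x : sameblock P x x.
Proof. by rewrite sameblock_pblock. Qed.

Lemma sameblock_sym x y : sameblock P x y = sameblock P y x.
Proof. by rewrite !sameblock_pblock eq_sym. Qed.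

Lemma sameblock_trans y x z : sameblock P x y -> sameblock P y z -> sameblock P x z.
Proof. by rewrite !sameblock_pblock => /eqP ->. Qed.

Lemma pblock_flip x : pblk (flip x) = negset (pblk x).
Proof.
case: P_NCB => -[_ negP _] _.
by apply: def_pblock NCB_trivIset (negP _ (NCB_pblock_mem x)) _; rewrite mem_negset NCB_mem_pblock.
Qed.

Lemma sameblock_flip x y : sameblock P (flip x) (flip y) = sameblock P x y.
Proof. by rewrite !sameblock_pblock !pblock_flip (can_eq (@negsetK n)). Qed.

Lemma NCB_noncrossing (a b c d : 'I_(n + n)) : a < b -> b < c -> c < d ->
  sameblock P a c -> sameblock P b d -> sameblock P a b.
Proof.
move=> ab bc cd ac bd; apply: contraT; rewrite sameblock_pblock => ne_ab.
case: P_NCB => _ nc; exfalso; apply: (nc _ _ (NCB_pblock_mem a) (NCB_pblock_mem b) ne_ab).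
exists a, b, c, d; split=> //.
by rewrite !NCB_mem_pblock -!sameblockE.
Qed.

Local Notation "i ~+ j" := (sameblock P (pos i) (pos j)) (at level 60).
Local Notation "i ~- j" := (sameblock P (pos i) (neg j)) (at level 60).
Local Notation X := (Xset P).

Lemma sameblock_posnegC (i j : 'I_n) : i ~- j = j ~- i.
Proof. by rewrite -sameblock_flip flip_pos flip_neg sameblock_sym. Qed.

Lemma sameblock_neg2pos (i j k : 'I_n) : i ~- j -> i ~- k -> j ~+ k.
Proof.
rewrite -[j ~+ k]sameblock_flip !flip_pos => ij ik.
by apply: sameblock_trans ik; rewrite sameblock_sym.
Qed.

Definition mixed (i : 'I_n) := [exists j, i ~- j].

Definition posblock (i : 'I_n) : {set 'I_n} := pospart (pblock P (pos i)).

Definition mirror (A : {set 'I_n}) : {set 'I_n} := [set j | [exists i in A, i ~- j]].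

Lemma mem_posblock i j : (j \in posblock i) = i ~+ j.
Proof. by rewrite inE sameblockE. Qed.

Lemma mixed_sameblock i j : i ~+ j -> mixed j -> mixed i.
Proof. by move=> ij /existsP[k jk]; apply/existsP; exists k; apply: sameblock_trans jk. Qed.

Lemma XsetP A : reflect (exists2 i, mixed i & A = posblock i) (A \in X).
Proof.
apply: (iffP imsetP) => [[B]|[i /existsP[j ij] ->]].
  rewrite inE => /andP[BP /andP[/existsP[i iB] /existsP[j jB]]] ->.
  rewrite -(def_pblock NCB_trivIset BP iB) in jB *.
  by exists i => //; apply/existsP; exists j; rewrite sameblockE.
exists (pblock P (pos i)) => //; rewrite inE NCB_pblock_mem /=.
apply/andP; split; apply/existsP; first by exists i; apply: NCB_mem_pblock.
by exists j; rewrite -sameblockE.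
Qed.

Lemma mem_Xset A x y : A \in X -> x \in A -> (y \in A) = x ~+ y.
Proof.
case/XsetP=> i _ ->; rewrite !mem_posblock => ix.
by apply/idP/idP; apply: sameblock_trans; rewrite // sameblock_sym.
Qed.

Lemma Xset_mixed A x : A \in X -> x \in A -> mixed x.
Proof.
by move=> AX xA; case/XsetP: AX xA => i mi -> xi; apply: mixed_sameblock mi; rewrite sameblock_sym -mem_posblock.
Qed.

Lemma Xset_eq A B x : A \in X -> B \in X -> x \in A -> x \in B -> A = B.
Proof. by move=> AX BX xA xB; apply/setP => y; rewrite (mem_Xset _ AX xA) (mem_Xset _ BX xB). Qed.

Lemma Xset_neq0 A : A \in X -> A != set0.
Proof. by case/XsetP => i _ ->; apply/set0Pn; exists i; rewrite mem_posblock sameblock_refl. Qed.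

Lemma mem_mirror A x y : A \in X -> x \in A -> (y \in mirror A) = x ~- y.
Proof.
move=> AX xA; rewrite inE; apply/existsP/idP => [[z /andP[zA zy]]|xy].
  by apply: sameblock_trans zy; rewrite -(mem_Xset _ AX xA).
by exists x; rewrite xA.
Qed.

Lemma mirror_posblock i j : i ~- j -> mirror (posblock i) = posblock j.
Proof.
move=> ij; have iX : posblock i \in X by apply/XsetP; exists i => //; apply/existsP; exists j.
apply/setP => y; rewrite (mem_mirror _ iX (_ : i \in _)) ?mem_posblock ?sameblock_refl //.
apply/idP/idP => [|jy]; first exact: sameblock_neg2pos.
rewrite sameblock_posnegC; apply: sameblock_trans (_ : y ~+ j) _; first by rewrite sameblock_sym.
by rewrite sameblock_posnegC.
Qed.

Lemma mirror_Xset A : A \in X -> mirror A \in X /\ mirror (mirror A) = A.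
Proof.
case/XsetP => i /existsP[j ij] ->; rewrite (mirror_posblock ij).
have ji : j ~- i by rewrite sameblock_posnegC.
by split; [apply/XsetP; exists j => //; apply/existsP; exists i | apply: mirror_posblock].
Qed.

Lemma sameblock_between_mixed (y x z w : 'I_n) :
  y < x -> x < z -> y ~+ z -> x ~- w -> y ~+ x.
Proof.
move=> yx xz yz xw; apply: (NCB_noncrossing (c := pos z) (d := neg w)) => //.
by rewrite /= ltn_addr.
Qed.

(* Otherwise some y <= x of B gives y < x < max B with x mixed and y not with x. *)
Lemma Xset_ltn A B x y : A \in X -> B \in X -> smax A < smax B -> x \in A -> y \in B -> x < y.
Proof.
move=> AX BX AB xA yB; have [M MB eM] := smax_mem (Xset_neq0 BX).
have /existsP[w xw] := Xset_mixed AX xA.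
have yx : ~~ (y ~+ x).
  by apply: contraTN AB => yx; rewrite -ltnNge (Xset_eq AX BX xA) // (mem_Xset _ BX yB).
rewrite ltnNge leq_eqVlt negb_or; apply/andP; split.
  by apply: contraNneq yx => /val_inj ->; rewrite sameblock_refl.
apply: contra yx => lt_yx; apply: sameblock_between_mixed (_ : x < M) _ xw => //.
  by rewrite -eM (leq_ltn_trans (leq_smax xA)).
by rewrite -(mem_Xset _ BX yB).
Qed.

Lemma Xset_smax_inj : {in X &, injective (@smax n)}.
Proof.
move=> A B AX BX eAB; have [a aA ea] := smax_mem (Xset_neq0 AX).
have [b bB eb] := smax_mem (Xset_neq0 BX).
by apply: (Xset_eq AX BX aA); rewrite (_ : a = b) //; apply: val_inj; rewrite /= -ea -eb.
Qed.

(* With a = max A < b = max B, the mirrored maxima a' <= b' would give the crossing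
   pos a < pos b < neg a' < neg b' (or put a and b together if a' = b'). *)
Lemma smax_mirror_ltn A B : A \in X -> B \in X ->
  smax A < smax B -> smax (mirror B) < smax (mirror A).
Proof.
move=> AX BX AB; have [a aA ea] := smax_mem (Xset_neq0 AX).
have [b bB eb] := smax_mem (Xset_neq0 BX).
have [a' a'A ea'] := smax_mem (Xset_neq0 (mirror_Xset AX).1).
have [b' b'B eb'] := smax_mem (Xset_neq0 (mirror_Xset BX).1).
rewrite (mem_mirror _ AX aA) in a'A; rewrite (mem_mirror _ BX bB) in b'B.
have not_ab : ~~ (a ~+ b).
  by apply: contraTN AB => ab; rewrite (Xset_eq AX BX aA) ?ltnn // (mem_Xset _ BX bB) sameblock_sym.
rewrite ea' eb' ltnNge; apply: contra not_ab; rewrite leq_eqVlt => /predU1P[/val_inj ea'b'|a'b'].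
  by apply: sameblock_trans a'A _; rewrite sameblock_sym ea'b'.
apply: (NCB_noncrossing (c := neg a') (d := neg b')) => //=.
- by rewrite -ea -eb.
- by rewrite ltn_addr.
- by rewrite ltn_add2l.
Qed.

Local Notation m := (mX P).
Local Notation A_ k := (Aof P k).
Local Notation le_smax := (fun A B : {set 'I_n} => smax A <= smax B).

Lemma mem_Xseq A : (A \in Xseq P) = (A \in X).
Proof. by rewrite mem_sort mem_enum. Qed.

Lemma Xseq_uniq : uniq (Xseq P).
Proof. by rewrite sort_uniq enum_uniq. Qed.

Lemma le_smax_trans : transitive le_smax.
Proof. by move=> B A C; apply: leq_trans. Qed.

Lemma Xseq_sorted : sorted le_smax (Xseq P).
Proof. by apply: sort_sorted => A B; apply: leq_total. Qed.

Lemma Aof_Xset k : k < m -> A_ k \in X.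
Proof. by move=> km; rewrite -mem_Xseq mem_nth. Qed.

Lemma Aof_inj k l : k < m -> l < m -> A_ k = A_ l -> k = l.
Proof. by move=> km lm /eqP; rewrite nth_uniq ?Xseq_uniq // => /eqP. Qed.

Lemma smax_Aof_ltn k l : k < l -> l < m -> smax (A_ k) < smax (A_ l).
Proof.
move=> kl lm; have km := ltn_trans kl lm.
rewrite ltn_neqAle (sorted_ltn_nth le_smax_trans set0 Xseq_sorted) ?inE // andbT.
apply: contraTneq kl => /(Xset_smax_inj (Aof_Xset km) (Aof_Xset lm)) /(Aof_inj km lm) ->.
by rewrite ltnn.
Qed.

Lemma Xseq_mirror : Xseq P = rev (map mirror (Xseq P)).
Proof.
have mirror_inj : {in X &, injective mirror}.
  by move=> A B AX BX eAB; rewrite -(mirror_Xset AX).2 eAB (mirror_Xset BX).2.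
apply: (@sorted_eq_in _ le_smax).
- by move=> B A C _ _ _; apply: le_smax_trans.
- move=> A B; rewrite !mem_Xseq => AX BX /andP[AB BA].
  by apply: Xset_smax_inj => //; apply: anti_leq; rewrite AB.
- exact: Xseq_sorted.
- rewrite rev_sorted; apply: (homo_sorted_in (P := [in X])) Xseq_sorted; last first.
    by apply/allP => A; rewrite mem_Xseq.
  move=> A B AX BX; rewrite /= leq_eqVlt => /predU1P[/(Xset_smax_inj AX BX) -> //|AB].
  exact/ltnW/smax_mirror_ltn.
apply: uniq_perm; rewrite ?Xseq_uniq ?rev_uniq ?(map_inj_in_uniq (f := mirror)) ?Xseq_uniq //.
  by move=> A B; rewrite !mem_Xseq; apply: mirror_inj.
move=> A; rewrite mem_rev; apply/idP/mapP => [|[B]]; rewrite !mem_Xseq.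
  by move=> AX; exists (mirror A); rewrite ?mem_Xseq ?(mirror_Xset AX).2 ?(mirror_Xset AX).1.
by move=> BX ->; rewrite (mirror_Xset BX).1.
Qed.

Lemma Aof_mirror k : k < m -> A_ (m - 1 - k) = mirror (A_ k).
Proof.
move=> km; have k'm : m - 1 - k < m by lia.
rewrite -[LHS](mirror_Xset (Aof_Xset k'm)).2; congr mirror.
rewrite /Aof [in RHS]Xseq_mirror nth_rev size_map // (nth_map set0) -/(mX P); last by lia.
by congr (mirror (nth _ _ _)); lia.
Qed.

Lemma Aof_ltn t u x y : t < u -> u < m -> x \in A_ t -> y \in A_ u -> x < y.
Proof.
move=> tu um; apply: Xset_ltn (Aof_Xset (ltn_trans tu um)) (Aof_Xset um) _.
exact: smax_Aof_ltn.
Qed.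

Lemma Aof_ltn_smin t u x : t < u -> u < m -> x \in A_ t -> x < smin (A_ u).
Proof.
move=> tu um xA; have [y yA ->] := smin_mem (Xset_neq0 (Aof_Xset um)).
exact: Aof_ltn xA yA.
Qed.

Lemma smax_ltn_Aof t u y : t < u -> u < m -> y \in A_ u -> smax (A_ t) < y.
Proof.
move=> tu um yA; have [x xA ->] := smax_mem (Xset_neq0 (Aof_Xset (ltn_trans tu um))).
exact: Aof_ltn xA yA.
Qed.

Lemma Aof_leq_smax t u x : t <= u -> u < m -> x \in A_ t -> x <= smax (A_ u).
Proof.
rewrite leq_eqVlt => /predU1P[-> _|tu um xA]; first exact: leq_smax.
have [y yA ->] := smax_mem (Xset_neq0 (Aof_Xset um)).
exact/ltnW/(Aof_ltn tu um xA yA).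
Qed.

Lemma smin_leq_Aof t u y : t <= u -> u < m -> y \in A_ u -> smin (A_ t) <= y.
Proof.
rewrite leq_eqVlt => /predU1P[-> _|tu um yA]; first exact: geq_smin.
have [x xA ->] := smin_mem (Xset_neq0 (Aof_Xset (ltn_trans tu um))).
exact/ltnW/(Aof_ltn tu um xA yA).
Qed.

Lemma Aof_disjoint t u x : t < m -> u < m -> x \in A_ t -> x \in A_ u -> t = u.
Proof. by move=> tm um xt xu; apply: Aof_inj (Xset_eq (Aof_Xset tm) (Aof_Xset um) xt xu). Qed.

Lemma Aof_pos t x y : t < m -> x \in A_ t -> (x ~+ y) = (y \in A_ t).
Proof. by move=> tm xA; rewrite (mem_Xset _ (Aof_Xset tm) xA). Qed.

Lemma Aof_neg t x y : t < m -> x \in A_ t -> (x ~- y) = (y \in A_ (m - 1 - t)).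
Proof. by move=> tm xA; rewrite Aof_mirror // (mem_mirror _ (Aof_Xset tm) xA). Qed.

Lemma unmixed_outside_Xset (i j : 'I_n) U x : i < j -> i ~+ j -> ~~ mixed i ->
  U \in X -> x \in U -> (x < i) || (j < x).
Proof.
move=> lt_ij ij not_mixed_i UX xU; have x_mixed := Xset_mixed UX xU.
apply: contraNT not_mixed_i; rewrite negb_or -!leqNgt.
case/andP; rewrite leq_eqVlt => /predU1P[/val_inj -> //|ix].
rewrite leq_eqVlt => /predU1P[/val_inj xj|xj]; first by apply: (mixed_sameblock ij); rewrite -xj.
apply: mixed_sameblock (x_mixed); case/existsP: x_mixed => w xw.
exact: sameblock_between_mixed ix xj ij xw.
Qed.

Lemma sameblock_sigma (i j : 'I_n) : sameblock (sigma P) i j ->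
  (i ~+ j /\ ~~ mixed i) \/
  exists2 t, t < m & (i \in A_ t) && ((j \in A_ t) || (j \in A_ (m - 1 - t))).
Proof.
case/existsP => S; rewrite !inE => /and3P[/orP[]].
  case/and3P=> SX _ /imsetP[B BP eS]; subst S; rewrite !inE => iB jB.
  rewrite -(def_pblock NCB_trivIset BP iB) -/(posblock i) in SX jB *.
  left; split; first by rewrite -mem_posblock inE.
  by apply/negP => mixed_i; case/negP: SX; apply/XsetP; exists i.
case/imsetP=> k _ ->; rewrite !inE => /orP[ik|ik] jk; right.
  by exists k; rewrite ?ik.
have km := ltn_ord k; exists (m - 1 - k); first by lia.
by rewrite ik (_ : m - 1 - (m - 1 - k) = k) 1?orbC //; lia.
Qed.

Lemma sameblock_sigma_cases (i j : 'I_n) : i < j -> sameblock (sigma P) i j ->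
  [\/ [/\ i ~+ j, ~~ (i ~- j) & forall t x, t < m -> x \in A_ t -> (x < i) || (j < x)],
      exists2 t, t < m & [/\ i \in A_ t, j \in A_ t, i ~+ j & (i ~- j) = (t == m - 1 - t)]
    | exists2 t, t < m - 1 - t &
        [/\ i \in A_ t, j \in A_ (m - 1 - t), ~~ (i ~+ j) & i ~- j]].
Proof.
move=> lt_ij /sameblock_sigma[[ij not_mixed_i]|[t tm /andP[it jt]]].
  apply: Or31; split=> // [|t x tm xt].
    by apply: contra not_mixed_i => ij'; apply/existsP; exists j.
  exact: unmixed_outside_Xset lt_ij ij not_mixed_i (Aof_Xset tm) xt.
have t'm : m - 1 - t < m by lia.
rewrite (Aof_pos _ tm it) (Aof_neg _ tm it).
have [jt'|not_jt'] := boolP (j \in A_ t).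
  apply: Or32; exists t => //; split=> //.
  by apply/idP/eqP => [/(Aof_disjoint tm t'm jt')|<-].
rewrite (negbTE not_jt') /= in jt *; apply: Or33; exists t => //.
rewrite ltnNge leq_eqVlt negb_or; apply/andP; split.
  by apply: contra not_jt' => /eqP eq_t't; rewrite -eq_t't.
by apply: contraTN lt_ij => t't; rewrite -leqNgt ltnW // (Aof_ltn t't tm jt it).
Qed.

Lemma sameblock_sigma_empty (i j : 'I_n) : i < j -> sameblock (sigma P) i j ->
  m = 0 -> i ~+ j /\ ~~ (i ~- j).
Proof.
move=> lt_ij sij m0; case: (sameblock_sigma_cases lt_ij sij) => [[]|[t]|[t]] //.
all: by rewrite m0; lia.
Qed.

Lemma sameblock_sigma_edge (i j : 'I_n) : i < j -> sameblock (sigma P) i j ->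
  0 < m -> ~~ odd m ->
  if (i <= smax (A_ (m./2 - 1))) && (smax (A_ (m./2 - 1)) < smin (A_ m./2))
       && (smin (A_ m./2) <= j)
  then ~~ (i ~+ j) /\ i ~- j else i ~+ j /\ ~~ (i ~- j).
Proof.
move=> lt_ij sij m_gt0 m_even; have := odd_double_half m.
rewrite (negbTE m_even) add0n -addnn; set h := m./2 => m_hh.
have hm : h < m by lia.
have h1m : h - 1 < m by lia.
have [a aA ea] := smax_mem (Xset_neq0 (Aof_Xset h1m)).
have [b bB eb] := smin_mem (Xset_neq0 (Aof_Xset hm)).
have ab : a < b by apply: Aof_ltn aA bB; lia.
rewrite ea eb ab andbT.
case: (sameblock_sigma_cases lt_ij sij) => [[-> -> outside]|[t tm [it jt -> ->]]|[t tt' [it jt -> ->]]].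
- by rewrite ifF //; have := outside _ _ h1m aA; lia.
- rewrite ifF; first by split=> //; lia.
  have [th|ht] := ltnP t h.
    by have := Aof_ltn_smin th hm jt; rewrite -eb; lia.
  by have := smax_ltn_Aof (_ : h - 1 < t) tm it; rewrite -ea; lia.
- rewrite ifT // -ea -eb; apply/andP; split.
    by apply: Aof_leq_smax it; lia.
  by apply: smin_leq_Aof jt; lia.
Qed.

Lemma sameblock_sigma_block (i j : 'I_n) : i < j -> sameblock (sigma P) i j -> odd m ->
  if (i \in A_ m./2) && (j \in A_ m./2) then i ~+ j /\ i ~- j
  else if (i < smin (A_ m./2)) && (smax (A_ m./2) < j) then ~~ (i ~+ j) /\ i ~- j
  else i ~+ j /\ ~~ (i ~- j).
Proof.
move=> lt_ij sij m_odd; have := odd_double_half m.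
rewrite m_odd -addnn; set h := m./2 => m_hh.
have hm : h < m by lia.
have [lo loB elo] := smin_mem (Xset_neq0 (Aof_Xset hm)).
have [hi hiB ehi] := smax_mem (Xset_neq0 (Aof_Xset hm)).
have lo_hi : lo <= hi by rewrite -ehi leq_smax.
have notin_h t : t < m -> t != h -> i \in A_ t -> i \notin A_ h.
  by move=> tm th it; apply: contra th => /(Aof_disjoint tm hm it) ->.
rewrite elo ehi.
case: (sameblock_sigma_cases lt_ij sij) => [[-> -> outside]|[t tm [it jt -> ->]]|[t tt' [it jt -> ->]]].
- have iB : i \notin A_ h by apply/negP => /(outside _ _ hm); rewrite ltnn /= ltnNge ltnW.
  by rewrite (negbTE iB) /= ifF //; have := outside _ _ hm loB; lia.
- have [eth|t_ne_h] := eqVneq t h.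
    by rewrite -eth it jt /=; split=> //; lia.
  rewrite (negbTE (notin_h _ tm t_ne_h it)) /= ifF; first by split=> //; lia.
  have [th|ht] := ltnP t h.
    by have := Aof_leq_smax (ltnW th) hm jt; rewrite ehi; lia.
  by have := smin_leq_Aof ht tm it; rewrite elo; lia.
- have th : t < h by lia.
  rewrite (negbTE (notin_h _ (ltn_trans th hm) (negbT (ltn_eqF th)) it)) /= ifT //.
  rewrite -elo -ehi (Aof_ltn_smin th hm it) /=.
  by apply: smax_ltn_Aof jt; lia.
Qed.

End NoncrossingTypeB.

Theorem lemma3p3 (n : nat) (P : {set {set 'I_(n + n)}}) :
  0 < n -> NCB P ->
  forall i j : 'I_n, i < j -> sameblock (sigma P) i j ->
  [/\ xpsi P = XEmpty ->
        sameblock P (pos i) (pos j) /\ ~~ sameblock P (pos i) (neg j),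
      (forall a b : nat, xpsi P = XEdge a b ->
        if (i <= a) && (a < b) && (b <= j)
        then ~~ sameblock P (pos i) (pos j) /\ sameblock P (pos i) (neg j)
        else sameblock P (pos i) (pos j) /\ ~~ sameblock P (pos i) (neg j)) &
      (forall B : {set 'I_n}, xpsi P = XBlock B ->
        if (i \in B) && (j \in B)
        then sameblock P (pos i) (pos j) /\ sameblock P (pos i) (neg j)
        else if (i < smin B) && (smax B < j)
        then ~~ sameblock P (pos i) (pos j) /\ sameblock P (pos i) (neg j)
        else sameblock P (pos i) (pos j) /\ ~~ sameblock P (pos i) (neg j))].
Proof.
move=> _ P_NCB i j lt_ij sij; rewrite /xpsi; split.
- case: ifP => [/eqP m0 _|_]; last by case: ifP.
  exact: (sameblock_sigma_empty P_NCB lt_ij sij m0).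
- move=> a b; case: ifP => // /negbT m_gt0; case: ifP => // m_even [<- <-].
  by apply: sameblock_sigma_edge; rewrite ?lt0n.
- move=> B; case: ifP => // _; case: ifP => // m_odd [<-].
  exact: (sameblock_sigma_block P_NCB lt_ij sij (negbFE m_odd)).
Qed.
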